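(* For every $j\in\mathbb Z$: (1) $\pi_j:X_j\to X_{j+1}$ is injective on the $1$-skeleton of $X_j$. (2) If $p$ is a $0$-cell of $X_j$ then $\pi_j^{-1}(\pi_j(p))=\{p\}$. (3) For every $p\in X_j$, $(\hat\pi^j)^{-1}(p)$ has at most $3$ points. (4) The link of every cell of $X_j$ contains at most $24$ cells. (5) For every $0$-cell $v$ of $X_j$, any two cells $\sigma,\sigma'$ of $X_j$ containing $v$ can be joined by a sequence $\sigma=\tau_1,\dots,\tau_\ell=\sigma'$ of cells of $X_j$ containing $v$, with $\tau_{i-1}$ and $\tau_i$ sharing a $1$-cell. (6) Every cell of $X_j$ contains at most $9$ open cells. (7) For every $N$ there is $C(N)$, independent of $j$, such that every combinatorial $N$-ball in $X_j$ contains at most $C(N)$ cells. (8) For every $2$-cell $\sigma$ of $X_j$, $(\hat\pi^j)^{-1}(\sigma)$ can be covered by at most $27$ $2$-cells of $Y_j$.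
   Context: Standing construction ($n=2$). Fix an integer $L\ge100$, $m=4$, $m_v=3L$. For $j\in\mathbb Z$, $Y_j$ is the cell complex on $\mathbb R^2$ given by the tiling by rectangles $[am^{-j},(a+1)m^{-j}]\times[bm_v^{-j},(b+1)m_v^{-j}]$, $a,b\in\mathbb Z$. Let $\Phi(x,y)=(m^{-1}x,m_v^{-1}y)$. For $k,\ell\in\mathbb Z$, $i\in\{1,2,3\}$, let $a_{k,\ell,i}=\{k+\tfrac i4\}\times[(3\ell+i-1)m_v^{-1},(3\ell+i)m_v^{-1}]$. $\mathcal R$ is the equivalence relation on $\mathbb R^2$ generated by $p\sim p+(0,m_v^{-1})$ for $p\in a_{k,\ell,i}$. $\Phi^j_*\mathcal R=\{(\Phi^jp,\Phi^jq):(p,q)\in\mathcal R\}$; $\mathcal R_j$ is generated by $\Phi^i_*\mathcal R$, $i<j$. $X_j=\mathbb R^2/\mathcal R_j$, $\hat\pi^j$ the quotient map, $\pi_j:X_j\to X_{j+1}$ the induced map. $X_j$ carries the CW structure whose open cells are the images under $\hat\pi^j$ of open cells of $Y_j$. A combinatorial $N$-ball in $X_j$ is the union of the closed cells reachable from a given cell by a chain (consecutive members intersect) of at most $N$ closed cells. *)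

From Stdlib Require Import Reals Lra Lia ZArith List Relations.
Open Scope R_scope.

Definition pt := (R * R)%type.

Definition m_h : R := 4.
Definition m_v (L : Z) : R := 3 * IZR L.

Definition PhiZ (L i : Z) (p : pt) : pt :=
  (fst p * powerRZ m_h (- i), snd p * powerRZ (m_v L) (- i)).

Definition in_a (L k l i : Z) (p : pt) : Prop :=
  fst p = IZR k + IZR i / 4 /\
  IZR (3 * l + i - 1) / m_v L <= snd p <= IZR (3 * l + i) / m_v L.

Definition gen0 (L : Z) (p q : pt) : Prop :=
  exists k l i : Z, (1 <= i <= 3)%Z /\ in_a L k l i p /\
    q = (fst p, snd p + / m_v L).

Definition Rrel (L : Z) : relation pt := clos_refl_sym_trans pt (gen0 L).

Definition PhiStar (L i : Z) (Rl : relation pt) : relation pt :=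
  fun p' q' => exists p q, Rl p q /\ p' = PhiZ L i p /\ q' = PhiZ L i q.

(** R_j : generated by Phi^i_* R, i < j.  X_j = R^2 / R_j; a point of X_j is an
    R_j-class and pihat^j maps p to its class.  Subsets of X_j are represented
    by their (saturated) preimages in R^2. *)
Definition Rj (L j : Z) : relation pt :=
  clos_refl_sym_trans pt (fun p q => exists i : Z, (i < j)%Z /\ PhiStar L i (Rrel L) p q).

Inductive ctype := CV (* vertex *) | CH (* horizontal edge *)
                 | CVt (* vertical edge *) | CF (* face *).
Definition cell := (ctype * Z * Z)%type.

Definition cdim (c : cell) : nat :=
  match c with (CV,_,_) => 0%nat | (CH,_,_) => 1%nat | (CVt,_,_) => 1%nat | (CF,_,_) => 2%nat end.

Definition sx (j : Z) : R := powerRZ m_h (- j).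
Definition sy (L j : Z) : R := powerRZ (m_v L) (- j).

(** Open cells of Y_j (the tiling by rectangles [a m^-j,(a+1)m^-j] x [b m_v^-j,(b+1)m_v^-j]). *)
Definition openY (L j : Z) (c : cell) (p : pt) : Prop :=
  let '(t, a, b) := c in
  let x := fst p in let y := snd p in
  match t with
  | CV => x = IZR a * sx j /\ y = IZR b * sy L j
  | CH => IZR a * sx j < x < IZR (a + 1) * sx j /\ y = IZR b * sy L j
  | CVt => x = IZR a * sx j /\ IZR b * sy L j < y < IZR (b + 1) * sy L j
  | CF => IZR a * sx j < x < IZR (a + 1) * sx j /\
          IZR b * sy L j < y < IZR (b + 1) * sy L j
  end.

Definition closedY (L j : Z) (c : cell) (p : pt) : Prop :=
  let '(t, a, b) := c in
  let x := fst p in let y := snd p in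
  match t with
  | CV => x = IZR a * sx j /\ y = IZR b * sy L j
  | CH => IZR a * sx j <= x <= IZR (a + 1) * sx j /\ y = IZR b * sy L j
  | CVt => x = IZR a * sx j /\ IZR b * sy L j <= y <= IZR (b + 1) * sy L j
  | CF => IZR a * sx j <= x <= IZR (a + 1) * sx j /\
          IZR b * sy L j <= y <= IZR (b + 1) * sy L j
  end.

(** Preimage under pihat^j of the image under pihat^j of a set (saturation). *)
Definition sat (L j : Z) (A : pt -> Prop) (q : pt) : Prop :=
  exists p, A p /\ Rj L j p q.

(** Open cell of X_j with index c (as preimage in R^2), and its closed cell
    (image of the closed cell of Y_j = closure in X_j). *)
Definition Xopen (L j : Z) (c : cell) : pt -> Prop := sat L j (openY L j c).
Definition Xclosed (L j : Z) (c : cell) : pt -> Prop := sat L j (closedY L j c).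

Definition subset (A B : pt -> Prop) : Prop := forall q, A q -> B q.
Definition seteq (A B : pt -> Prop) : Prop := forall q, A q <-> B q.

Definition atmost_distinct (n : nat) (P : cell -> Prop) (S : cell -> pt -> Prop) : Prop :=
  exists l : list cell, (length l <= n)%nat /\
    forall c, P c -> exists c', In c' l /\ seteq (S c) (S c').

Definition skel1 (L j : Z) (q : pt) : Prop :=
  exists c, (cdim c <= 1)%nat /\ Xopen L j c q.

Definition in_link (L j : Z) (c d : cell) : Prop :=
  ~ seteq (Xopen L j d) (Xopen L j c) /\ subset (Xopen L j c) (Xclosed L j d).

Definition adj_at (L j : Z) (v d d' : cell) : Prop :=
  subset (Xopen L j v) (Xclosed L j d) /\ subset (Xopen L j v) (Xclosed L j d') /\
  exists e, cdim e = 1%nat /\ subset (Xopen L j e) (Xclosed L j d) /\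
            subset (Xopen L j e) (Xclosed L j d').

Definition meet (L j : Z) (c d : cell) : Prop :=
  exists q, Xclosed L j c q /\ Xclosed L j d q.

Fixpoint reach (L j : Z) (c0 : cell) (n : nat) (c : cell) : Prop :=
  match n with
  | O => False
  | S n' => c = c0 \/ exists d, reach L j c0 n' d /\ meet L j d c
  end.

Definition ball (L j : Z) (c0 : cell) (N : nat) (q : pt) : Prop :=
  exists c, reach L j c0 N c /\ Xclosed L j c q.

(* Rescaling by [Phi^-j] turns [Y_j] into the unit grid, and in these
   coordinates [R_j] becomes an explicit relation that does not depend on [j]:
   a point [(X, Y)] with [X = 4^e (4k + s)], [s] in [{1,2,3}], is identified
   exactly with the points [(X, Y + n (3L)^e)] lying in the same block
   [[(3L)^e (3l+s-1), (3L)^e (3l+s+1)]]; points on other columns are identified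
   with nothing.  Since a block is two steps long, classes have at most three
   points, and a unit strip is glued only along its two boundary columns, which
   gives all the uniform counting bounds.  Going from [j + 1] down to [j] only
   forgets the level-0 columns of scale [j + 1]; they sit at non-integer
   abscissae, where the 1-skeleton consists of horizontal edges at integer
   heights, which a vertical step of [1/(3L)] cannot relate.  Around a vertex,
   the cells of a star form a cycle of edge-adjacent cells, and two glued
   vertices of a column are joined through glued vertical edges. *)

From Stdlib Require Import Reals ZArith List Relations Lra Lia Classical.
Open Scope R_scope.

Definition level (X : R) (e k s : Z) : Prop :=
  (0 <= e)%Z /\ (1 <= s <= 3)%Z /\ X = IZR (4 ^ e * (4 * k + s)).

Definition vstep (L e : Z) : R := IZR ((3 * L) ^ e).

Definition in_block (L e s l : Z) (Y : R) : Prop :=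
  vstep L e * (IZR (3 * l + s) - 1) <= Y <= vstep L e * (IZR (3 * l + s) + 1).

(* The relation [R_j] read in the unit coordinates [to_unit L j] below. *)
Definition unit_rel (L : Z) (P Q : pt) : Prop :=
  fst Q = fst P /\
  (snd Q = snd P \/
   exists e k s l n, level (fst P) e k s /\ in_block L e s l (snd P) /\
     in_block L e s l (snd Q) /\ snd Q = snd P + IZR n * vstep L e).

Lemma level_unique X e k s e' k' s' :
  level X e k s -> level X e' k' s' -> e = e' /\ k = k' /\ s = s'.
Proof.
  intros (He & Hs & ->) (He' & Hs' & HX). apply eq_IZR in HX.
  assert (Hlt : forall e k s e' k' s', (0 <= e)%Z -> (e < e')%Z -> (1 <= s <= 3)%Z ->
            (4 ^ e * (4 * k + s) <> 4 ^ e' * (4 * k' + s'))%Z).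
  { clear. intros e k s e' k' s' He Hlt Hs H.
    replace e' with (e + 1 + (e' - e - 1))%Z in H by lia.
    rewrite !Z.pow_add_r, Z.pow_1_r in H by lia.
    assert (0 < 4 ^ e)%Z by (apply Z.pow_pos_nonneg; lia).
    assert (4 * k + s = 4 * (4 ^ (e' - e - 1) * (4 * k' + s')))%Z
      by (apply (Z.mul_cancel_l _ _ (4 ^ e)); lia).
    lia. }
  destruct (Z.lt_trichotomy e e') as [Hl | [<- | Hl]].
  - exfalso. exact (Hlt _ _ _ _ _ _ He Hl Hs HX).
  - assert (0 < 4 ^ e)%Z by (apply Z.pow_pos_nonneg; lia).
    assert (4 * k + s = 4 * k' + s')%Z by (apply (Z.mul_cancel_l _ _ (4 ^ e)); lia).
    lia.
  - exfalso. exact (Hlt _ _ _ _ _ _ He' Hl Hs' (eq_sym HX)).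
Qed.

Lemma level_integer X e k s : level X e k s -> exists a, X = IZR a.
Proof. intros (_ & _ & ->). eauto. Qed.

Lemma vstep_pos L e : (1 <= L)%Z -> (0 <= e)%Z -> 0 < vstep L e.
Proof. intros. apply IZR_lt, Z.pow_pos_nonneg; lia. Qed.

Lemma block_unique L e s l l' Y : (1 <= L)%Z -> (0 <= e)%Z ->
  in_block L e s l Y -> in_block L e s l' Y -> l = l'.
Proof.
  intros HL He [H1 H2] [H3 H4]. pose proof (vstep_pos L e HL He) as HB.
  assert (IZR (3 * l + s) - 1 <= IZR (3 * l' + s) + 1)
    by (apply (Rmult_le_reg_l (vstep L e)); lra).
  assert (IZR (3 * l' + s) - 1 <= IZR (3 * l + s) + 1)
    by (apply (Rmult_le_reg_l (vstep L e)); lra).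
  assert (3 * l + s <= 3 * l' + s + 2)%Z by (apply le_IZR; rewrite (plus_IZR (3 * l' + s)); lra).
  assert (3 * l' + s <= 3 * l + s + 2)%Z by (apply le_IZR; rewrite (plus_IZR (3 * l + s)); lra).
  lia.
Qed.

(* A block has length twice the step, so a column moves by at most two steps. *)
Lemma block_shift_bound L e s l Y n : (1 <= L)%Z -> (0 <= e)%Z ->
  in_block L e s l Y -> in_block L e s l (Y + IZR n * vstep L e) -> (-2 <= n <= 2)%Z.
Proof.
  intros HL He [H1 H2] [H3 H4]. pose proof (vstep_pos L e HL He) as HB.
  assert (IZR n <= 2) by (apply (Rmult_le_reg_r (vstep L e)); nra).
  assert (-2 <= IZR n) by (apply (Rmult_le_reg_r (vstep L e)); nra).
  split; apply le_IZR; lra.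
Qed.

Lemma unit_rel_refl L P : unit_rel L P P.
Proof. split; auto. Qed.

Lemma unit_rel_sym L P Q : unit_rel L P Q -> unit_rel L Q P.
Proof.
  intros [Hx [Hy | (e & k & s & l & n & Hl & HP & HQ & Hy)]]; split; auto.
  right. exists e, k, s, l, (- n)%Z. rewrite Hx.
  split; [| split; [| split]]; auto. rewrite Hy, opp_IZR. ring.
Qed.

Lemma unit_rel_trans L P Q S : (1 <= L)%Z ->
  unit_rel L P Q -> unit_rel L Q S -> unit_rel L P S.
Proof.
  intros HL [Hx1 H1] [Hx2 H2]. split; [congruence |].
  destruct H1 as [H1 | (e & k & s & l & n & Hl & HP & HQ & Hy)];
  destruct H2 as [H2 | (e' & k' & s' & l' & n' & Hl' & HQ' & HS & Hy')].
  - left. congruence.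
  - right. exists e', k', s', l', n'. rewrite <- Hx1, <- H1. tauto.
  - right. exists e, k, s, l, n. rewrite H2. tauto.
  - right. rewrite Hx1 in Hl'.
    destruct (level_unique _ _ _ _ _ _ _ Hl Hl') as (<- & <- & <-).
    assert (l' = l) as ->
      by (destruct Hl as [He _]; exact (block_unique L e s l' l (snd Q) HL He HQ' HQ)).
    exists e, k, s, l, (n + n')%Z. split; [| split; [| split]]; auto.
    rewrite Hy', Hy, plus_IZR. ring.
Qed.

Lemma unit_rel_int_shift L P Q : unit_rel L P Q ->
  exists z : Z, Q = (fst P, snd P + IZR z).
Proof.
  destruct P as [x y], Q as [x' y'].
  intros [Hx [Hy | (e & _ & _ & _ & n & _ & _ & _ & Hy)]]; cbn [fst snd] in *; subst.
  - exists 0%Z. f_equal. ring.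
  - exists (n * (3 * L) ^ e)%Z. rewrite mult_IZR. reflexivity.
Qed.

Lemma unit_rel_nonint L P Q : (forall a, fst P <> IZR a) -> unit_rel L P Q -> Q = P.
Proof.
  destruct P as [x y], Q as [x' y'].
  intros Hn [Hx [Hy | (e & k & s & _ & _ & Hl & _)]]; cbn [fst snd] in *.
  - congruence.
  - destruct (level_integer _ _ _ _ Hl) as [a Ha]. exfalso. exact (Hn a Ha).
Qed.

Lemma unit_rel_column_shifts L X : (1 <= L)%Z -> exists zs : list Z, (length zs <= 5)%nat /\
  forall Y Q, unit_rel L (X, Y) Q -> exists z, In z zs /\ Q = (X, Y + IZR z).
Proof.
  intros HL.
  assert (Hperiod : exists U : Z, forall Y Q, unit_rel L (X, Y) Q ->
            exists n, (-2 <= n <= 2)%Z /\ Q = (X, Y + IZR (n * U))).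
  { destruct (classic (exists e k s, level X e k s)) as [(e & k & s & Hl) | Hn].
    - exists ((3 * L) ^ e)%Z.
      intros Y [X' Y'] [Hx [H | (e' & k' & s' & l & n & Hl' & H1 & H2 & H)]];
        cbn [fst snd] in *; subst X'.
      + exists 0%Z. split; [lia |]. rewrite H. f_equal. simpl. ring.
      + destruct (level_unique _ _ _ _ _ _ _ Hl Hl') as (<- & <- & <-).
        exists n. rewrite H, mult_IZR. split; [| reflexivity].
        destruct Hl as [He _]. rewrite H in H2. exact (block_shift_bound L e s l Y n HL He H1 H2).
    - exists 0%Z. intros Y [X' Y'] [Hx [H | (e & k & s & _ & _ & Hl & _)]]; cbn [fst snd] in *.
      + exists 0%Z. split; [lia |]. subst. f_equal. simpl. ring.
      + exfalso. eauto. }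
  destruct Hperiod as [U HU].
  exists (map (fun n => n * U) (-2 :: -1 :: 0 :: 1 :: 2 :: nil))%Z. split; [reflexivity |].
  intros Y Q HQ. destruct (HU Y Q HQ) as (n & Hn & ->). exists (n * U)%Z. split; [| reflexivity].
  apply (in_map (fun n => n * U)%Z). cbn [In]. lia.
Qed.

Lemma multiples_in_window (a B : R) : 0 < B -> exists m : Z, forall n : Z,
  a <= IZR n * B <= a + 2 * B -> (m - 1 <= n <= m + 1)%Z.
Proof.
  intros HB. exists (up (a / B)). intros n [H1 H2].
  destruct (archimed (a / B)) as [Hu1 Hu2].
  assert (a / B <= IZR n) by (apply (Rmult_le_reg_r B); auto; unfold Rdiv;
    rewrite Rmult_assoc, Rinv_l, Rmult_1_r; lra).
  assert (IZR n <= a / B + 2) by (apply (Rmult_le_reg_r B); auto; unfold Rdiv;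
    rewrite Rmult_plus_distr_r, Rmult_assoc, Rinv_l, Rmult_1_r; lra).
  assert (up (a / B) - 1 <= n)%Z by (apply le_IZR; rewrite minus_IZR; lra).
  assert (n < up (a / B) + 2)%Z by (apply lt_IZR; rewrite plus_IZR; lra).
  lia.
Qed.

Lemma unit_rel_fibre L P : (1 <= L)%Z -> exists zs : list Z, (length zs <= 3)%nat /\
  forall Q, unit_rel L P Q -> exists z, In z zs /\ Q = (fst P, snd P + IZR z).
Proof.
  intros HL. destruct P as [X Y].
  destruct (classic (exists e k s l, level X e k s /\ in_block L e s l Y))
    as [(e & k & s & l & Hl & Hb) | Hn].
  - pose proof Hl as [He _]. pose proof (vstep_pos L e HL He) as HB.
    set (B := vstep L e) in *.
    destruct (multiples_in_window (B * (IZR (3 * l + s) - 1) - Y) B HB) as [m Hm].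
    exists (map (fun n => n * (3 * L) ^ e) ((m - 1) :: m :: (m + 1) :: nil))%Z.
    split; [reflexivity |].
    intros [X' Y'] [Hx HQ]; cbn [fst snd] in *. subst X'.
    assert (Hn : exists n, Y' = Y + IZR n * B /\ in_block L e s l (Y + IZR n * B)).
    { destruct HQ as [-> | (e' & k' & s' & l' & n & Hl' & H1 & H2 & ->)].
      - exists 0%Z. split; [simpl; ring |]. rewrite Rmult_0_l, Rplus_0_r. exact Hb.
      - destruct (level_unique _ _ _ _ _ _ _ Hl Hl') as (<- & <- & <-).
        assert (l' = l) as -> by exact (block_unique L e s l' l Y HL He H1 Hb).
        eauto. }
    clear HQ. destruct Hn as (n & -> & Hb1 & Hb2). fold B in Hb1, Hb2.
    assert (Hw : (m - 1 <= n <= m + 1)%Z) by (apply Hm; destruct Hb; split; lra).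
    exists (n * (3 * L) ^ e)%Z. rewrite mult_IZR. split; [| reflexivity].
    apply (in_map (fun n => n * (3 * L) ^ e)%Z). cbn [In]. lia.
  - exists (0%Z :: nil). split; [cbn; lia |].
    intros [X' Y'] [Hx [Hy | (e & k & s & l & n & Hl & Hb & _)]]; cbn [fst snd] in *.
    + exists 0%Z. split; [left; reflexivity |]. subst. f_equal. ring.
    + exfalso. apply Hn. exists e, k, s, l. tauto.
Qed.

Lemma Rmult_lt_iff_r s a b : 0 < s -> (a * s < b * s <-> a < b).
Proof.
  intros Hs. split; [apply Rmult_lt_reg_r; auto | apply Rmult_lt_compat_r; auto].
Qed.

Lemma Rmult_le_iff_r s a b : 0 < s -> (a * s <= b * s <-> a <= b).
Proof.
  intros Hs. split; [apply Rmult_le_reg_r; auto | intros; apply Rmult_le_compat_r; lra].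
Qed.

Lemma Rmult_eq_iff_r s a b : 0 < s -> (a * s = b * s <-> a = b).
Proof. intros Hs. split; [intros H; apply (Rmult_eq_reg_r s); lra | intros ->; reflexivity]. Qed.

(* Coordinates in which [Y_j] is the integer grid. *)
Definition to_unit (L j : Z) (p : pt) : pt :=
  (fst p * powerRZ m_h j, snd p * powerRZ (m_v L) j).

Definition of_unit (L j : Z) (P : pt) : pt := (fst P * sx j, snd P * sy L j).

Lemma m_v_IZR L : m_v L = IZR (3 * L).
Proof. unfold m_v. rewrite mult_IZR. reflexivity. Qed.

Lemma m_v_pos L : (1 <= L)%Z -> 0 < m_v L.
Proof. intros. rewrite m_v_IZR. apply IZR_lt. lia. Qed.

Lemma sx_pos j : 0 < sx j.
Proof. apply powerRZ_lt. unfold m_h. lra. Qed.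

Lemma sy_pos L j : (1 <= L)%Z -> 0 < sy L j.
Proof. intros. apply powerRZ_lt, m_v_pos; auto. Qed.

Lemma powerRZ_opp_r r j : r <> 0 -> powerRZ r j * powerRZ r (- j) = 1.
Proof. intros. rewrite <- powerRZ_add by auto. rewrite Z.add_opp_diag_r. reflexivity. Qed.

Lemma to_unit_of_unit L j P : (1 <= L)%Z -> to_unit L j (of_unit L j P) = P.
Proof.
  intros HL. destruct P as [X Y]. pose proof (m_v_pos L HL).
  unfold to_unit, of_unit, sx, sy, m_h; cbn [fst snd].
  rewrite !Rmult_assoc, !(Rmult_comm (powerRZ _ (- j))), !powerRZ_opp_r by lra.
  f_equal; ring.
Qed.

Lemma of_unit_to_unit L j p : (1 <= L)%Z -> of_unit L j (to_unit L j p) = p.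
Proof.
  intros HL. destruct p as [x y]. pose proof (m_v_pos L HL).
  unfold to_unit, of_unit, sx, sy, m_h; cbn [fst snd].
  rewrite !Rmult_assoc, !powerRZ_opp_r by lra. f_equal; ring.
Qed.

Lemma powerRZ_succ_IZR (b e : Z) : (b <> 0)%Z -> (0 <= e)%Z ->
  powerRZ (IZR b) (e + 1) = IZR b * IZR (b ^ e).
Proof.
  intros Hb He. rewrite powerRZ_add, powerRZ_1 by (apply not_0_IZR; auto).
  rewrite Rmult_comm. f_equal. destruct e as [| p | p]; [reflexivity | | lia].
  symmetry. apply Zpower_pos_powerRZ.
Qed.

Lemma to_unit_PhiZ L i j p : (1 <= L)%Z -> (i < j)%Z ->
  to_unit L j (PhiZ L i p) =
  (fst p * (4 * IZR (4 ^ (j - i - 1))), snd p * (m_v L * vstep L (j - i - 1))).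
Proof.
  intros HL Hij. pose proof (m_v_pos L HL).
  unfold to_unit, PhiZ, m_h, vstep; cbn [fst snd].
  rewrite !Rmult_assoc, <- !powerRZ_add by lra.
  replace (- i + j)%Z with (j - i - 1 + 1)%Z by lia.
  rewrite m_v_IZR, !powerRZ_succ_IZR by lia. reflexivity.
Qed.

Lemma in_a_unit L k l s x Y : (1 <= L)%Z ->
  in_a L k l s (x, Y / m_v L) <->
  x = IZR k + IZR s / 4 /\ IZR (3 * l + s) - 1 <= Y <= IZR (3 * l + s).
Proof.
  intros HL. pose proof (m_v_pos L HL) as HM.
  assert (Hinv : 0 < / m_v L) by (apply Rinv_0_lt_compat; auto).
  unfold in_a, Rdiv; cbn [fst snd]. rewrite !Rmult_le_iff_r by auto.
  rewrite minus_IZR. reflexivity.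
Qed.

Lemma gen_unit_rel L i j P Q : (1 <= L)%Z -> (i < j)%Z -> gen0 L P Q ->
  unit_rel L (to_unit L j (PhiZ L i P)) (to_unit L j (PhiZ L i Q)).
Proof.
  intros HL Hij (k & l & s & Hs & HP & ->). pose proof (m_v_pos L HL) as HM.
  destruct P as [x y]. replace y with (y * m_v L / m_v L) in HP by (field; lra).
  apply in_a_unit in HP as [Hx HY]; auto.
  rewrite !to_unit_PhiZ by auto. cbn [fst snd].
  set (e := (j - i - 1)%Z). assert (He : (0 <= e)%Z) by lia.
  pose proof (vstep_pos L e HL He) as HB.
  split; [reflexivity | right]. exists e, k, s, l, 1%Z. cbn [fst snd].
  split; [| split; [| split]].
  - split; [exact He | split; [exact Hs |]].
    rewrite Hx, mult_IZR, plus_IZR, mult_IZR. field.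
  - split; nra.
  - replace ((y + / m_v L) * (m_v L * vstep L e))
      with (y * (m_v L * vstep L e) + vstep L e) by (field; lra).
    split; nra.
  - field. lra.
Qed.

Lemma unit_step_Rj L j X Y e k s l : (1 <= L)%Z -> level X e k s ->
  vstep L e * (IZR (3 * l + s) - 1) <= Y <= vstep L e * IZR (3 * l + s) ->
  Rj L j (of_unit L j (X, Y)) (of_unit L j (X, Y + vstep L e)).
Proof.
  intros HL Hl HY. pose proof Hl as (He & Hs & HX).
  pose proof (m_v_pos L HL) as HM. pose proof (vstep_pos L e HL He) as HB.
  set (i := (j - e - 1)%Z). set (y0 := Y / vstep L e).
  assert (Himg : forall y, of_unit L j (X, y * vstep L e) =
                           PhiZ L i (IZR k + IZR s / 4, y / m_v L)).
  { intros y.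
    rewrite <- (of_unit_to_unit L j (PhiZ L i (IZR k + IZR s / 4, y / m_v L))) by auto.
    f_equal. rewrite to_unit_PhiZ by (auto; unfold i; lia).
    replace (j - i - 1)%Z with e by (unfold i; lia). cbn [fst snd]. f_equal.
    - rewrite HX, mult_IZR, plus_IZR, mult_IZR. field.
    - field. lra. }
  apply rst_step. exists i. split; [unfold i; lia |].
  exists (IZR k + IZR s / 4, y0 / m_v L), (IZR k + IZR s / 4, (y0 + 1) / m_v L).
  split; [| split].
  - apply rst_step. exists k, l, s. split; [exact Hs | split].
    + apply in_a_unit; auto. split; [reflexivity |].
      unfold y0. split; apply (Rmult_le_reg_r (vstep L e)); auto;
        replace (Y / vstep L e * vstep L e) with Y by (field; lra); lra.
    + cbn [fst snd]. f_equal. field. lra.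
  - replace Y with (y0 * vstep L e) by (unfold y0; field; lra). apply Himg.
  - replace (Y + vstep L e) with ((y0 + 1) * vstep L e) by (unfold y0; field; lra).
    apply Himg.
Qed.

Lemma unit_steps_Rj L j X Y e k s l (n : nat) : (1 <= L)%Z -> level X e k s ->
  in_block L e s l Y -> in_block L e s l (Y + INR n * vstep L e) ->
  Rj L j (of_unit L j (X, Y)) (of_unit L j (X, Y + INR n * vstep L e)).
Proof.
  intros HL Hl. pose proof Hl as [He _]. pose proof (vstep_pos L e HL He) as HB.
  revert Y. induction n as [| n IH]; intros Y HY HYn.
  - rewrite Rmult_0_l, Rplus_0_r. apply rst_refl.
  - rewrite S_INR in HYn |- *. destruct HY, HYn. pose proof (pos_INR n).
    apply rst_trans with (of_unit L j (X, Y + vstep L e)).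
    + apply (unit_step_Rj L j X Y e k s l); auto. split; nra.
    + replace (Y + (INR n + 1) * vstep L e) with (Y + vstep L e + INR n * vstep L e) by ring.
      apply IH; split; nra.
Qed.

Lemma unit_rel_Rj L j P Q : (1 <= L)%Z ->
  unit_rel L P Q -> Rj L j (of_unit L j P) (of_unit L j Q).
Proof.
  intros HL. destruct P as [X Y], Q as [X' Y'].
  intros [Hx [Hy | (e & k & s & l & n & Hl & HP & HQ & Hy)]]; cbn [fst snd] in *;
    subst X' Y'.
  - apply rst_refl.
  - destruct (Z_le_gt_dec 0 n) as [Hn | Hn].
    + rewrite <- (Z2Nat.id n), <- INR_IZR_INZ in HQ |- * by lia.
      apply (unit_steps_Rj L j X _ e k s l); auto.
    + apply rst_sym.
      replace Y with (Y + IZR n * vstep L e + INR (Z.to_nat (- n)) * vstep L e) at 2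
        by (rewrite INR_IZR_INZ, Z2Nat.id, opp_IZR by lia; ring).
      apply (unit_steps_Rj L j X _ e k s l); auto.
      * rewrite INR_IZR_INZ, Z2Nat.id, opp_IZR by lia.
        replace (Y + IZR n * vstep L e + - IZR n * vstep L e) with Y by ring. exact HP.
Qed.

Lemma Rj_unit_rel L j p q : (1 <= L)%Z ->
  Rj L j p q -> unit_rel L (to_unit L j p) (to_unit L j q).
Proof.
  intros HL H. induction H as [p q Hpq | p | p q _ IH | p q r _ IH1 _ IH2].
  - destruct Hpq as (i & Hij & P & Q & HPQ & -> & ->).
    induction HPQ as [P Q HG | P | P Q _ IH | P Q S _ IH1 _ IH2].
    + apply gen_unit_rel; auto.
    + apply unit_rel_refl.
    + apply unit_rel_sym; auto.
    + eapply unit_rel_trans; eauto.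
  - apply unit_rel_refl.
  - apply unit_rel_sym; auto.
  - eapply unit_rel_trans; eauto.
Qed.

Lemma Rj_iff_unit_rel L j p q : (1 <= L)%Z ->
  Rj L j p q <-> unit_rel L (to_unit L j p) (to_unit L j q).
Proof.
  intros HL. split; [apply Rj_unit_rel; auto |].
  intros H. rewrite <- (of_unit_to_unit L j p), <- (of_unit_to_unit L j q) by auto.
  apply unit_rel_Rj; auto.
Qed.

Lemma vstep_pred L e : (1 <= e)%Z -> vstep L e = vstep L (e - 1) * m_v L.
Proof.
  intros He. unfold vstep. rewrite m_v_IZR, <- mult_IZR. f_equal.
  replace e with (Z.succ (e - 1)) at 1 by lia. rewrite Z.pow_succ_r by lia. ring.
Qed.

(* Passing from scale [j + 1] to scale [j] only forgets the level-0 columns of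
   scale [j + 1], which sit at non-integer abscissae of scale [j]. *)
Lemma unit_rel_refine L X Y X' Y' : (1 <= L)%Z ->
  unit_rel L (X * 4, Y * m_v L) (X' * 4, Y' * m_v L) ->
  unit_rel L (X, Y) (X', Y') \/
  ((forall a, X <> IZR a) /\ X' = X /\
   exists n, n <> 0%Z /\ (-2 <= n <= 2)%Z /\ Y' * m_v L = Y * m_v L + IZR n).
Proof.
  intros HL [Hx H]; cbn [fst snd] in *. pose proof (m_v_pos L HL) as HM.
  assert (X' = X) as -> by lra.
  destruct H as [H | (e & k & s & l & n & Hl & HP & HQ & Hy)].
  - left. split; [reflexivity | left]. cbn. apply (Rmult_eq_reg_r (m_v L)); lra.
  - pose proof Hl as (He & Hs & HX).
    destruct (Z.eq_dec e 0) as [-> | He0].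
    + pose proof (block_shift_bound L 0 s l _ n HL (Z.le_refl 0) HP) as Hn.
      rewrite <- Hy in Hn. specialize (Hn HQ).
      unfold vstep in Hy. rewrite Z.pow_0_r, Rmult_1_r in Hy.
      destruct (Z.eq_dec n 0) as [-> | Hn0].
      * left. split; [reflexivity | left]. cbn. apply (Rmult_eq_reg_r (m_v L)); lra.
      * right. split; [| split; [reflexivity | exists n; auto]].
        intros a ->. rewrite Z.pow_0_r, Z.mul_1_l, <- (mult_IZR a 4) in HX.
        apply eq_IZR in HX. lia.
    + left. split; [reflexivity | right]. exists (e - 1)%Z, k, s, l, n. cbn [fst snd].
      unfold in_block in *. rewrite (vstep_pred L e) in HP, HQ, Hy by lia.
      split; [| split; [| split]].
      * split; [lia | split; [exact Hs |]].
        apply (Rmult_eq_reg_r 4); [| lra]. rewrite HX, <- (mult_IZR _ 4). f_equal.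
        replace e with (Z.succ (e - 1)) at 1 by lia. rewrite Z.pow_succ_r by lia. ring.
      * split; apply (Rmult_le_reg_r (m_v L)); auto; lra.
      * split; apply (Rmult_le_reg_r (m_v L)); auto; lra.
      * apply (Rmult_eq_reg_r (m_v L)); lra.
Qed.

Lemma to_unit_succ L j p : (1 <= L)%Z ->
  to_unit L (j + 1) p = (fst (to_unit L j p) * 4, snd (to_unit L j p) * m_v L).
Proof.
  intros HL. pose proof (m_v_pos L HL). unfold to_unit, m_h. cbn [fst snd].
  rewrite !powerRZ_add, !powerRZ_1 by lra. f_equal; ring.
Qed.

Lemma Rj_succ_cases L j p q : (1 <= L)%Z -> Rj L (j + 1) p q ->
  Rj L j p q \/
  ((forall a, fst (to_unit L j p) <> IZR a) /\ fst (to_unit L j q) = fst (to_unit L j p) /\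
   exists n, n <> 0%Z /\ (-2 <= n <= 2)%Z /\
     snd (to_unit L j q) * m_v L = snd (to_unit L j p) * m_v L + IZR n).
Proof.
  intros HL H. rewrite Rj_iff_unit_rel, !to_unit_succ in H by auto.
  destruct (unit_rel_refine L _ _ _ _ HL H) as [H' | H']; [left | right; exact H'].
  apply Rj_iff_unit_rel; auto.
Qed.

Definition openU (c : cell) (P : pt) : Prop :=
  let '(t, a, b) := c in
  let x := fst P in let y := snd P in
  match t with
  | CV => x = IZR a /\ y = IZR b
  | CH => IZR a < x < IZR a + 1 /\ y = IZR b
  | CVt => x = IZR a /\ IZR b < y < IZR b + 1
  | CF => IZR a < x < IZR a + 1 /\ IZR b < y < IZR b + 1
  end.

Definition closedU (c : cell) (P : pt) : Prop :=
  let '(t, a, b) := c in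
  let x := fst P in let y := snd P in
  match t with
  | CV => x = IZR a /\ y = IZR b
  | CH => IZR a <= x <= IZR a + 1 /\ y = IZR b
  | CVt => x = IZR a /\ IZR b <= y <= IZR b + 1
  | CF => IZR a <= x <= IZR a + 1 /\ IZR b <= y <= IZR b + 1
  end.

Definition Uopen (L : Z) (c : cell) (Q : pt) : Prop := exists P, openU c P /\ unit_rel L P Q.
Definition Uclosed (L : Z) (c : cell) (Q : pt) : Prop := exists P, closedU c P /\ unit_rel L P Q.

Lemma openY_of_unit L j c P : (1 <= L)%Z -> openY L j c (of_unit L j P) <-> openU c P.
Proof.
  intros HL. pose proof (sx_pos j). pose proof (sy_pos L j HL).
  destruct c as [[t a] b], P as [X Y]. unfold openY, openU, of_unit; cbn [fst snd].
  rewrite !plus_IZR.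
  destruct t; rewrite ?(Rmult_lt_iff_r (sx j)), ?(Rmult_lt_iff_r (sy L j)),
    ?(Rmult_eq_iff_r (sx j)), ?(Rmult_eq_iff_r (sy L j)) by auto; reflexivity.
Qed.

Lemma closedY_of_unit L j c P : (1 <= L)%Z -> closedY L j c (of_unit L j P) <-> closedU c P.
Proof.
  intros HL. pose proof (sx_pos j). pose proof (sy_pos L j HL).
  destruct c as [[t a] b], P as [X Y]. unfold closedY, closedU, of_unit; cbn [fst snd].
  rewrite !plus_IZR.
  destruct t; rewrite ?(Rmult_le_iff_r (sx j)), ?(Rmult_le_iff_r (sy L j)),
    ?(Rmult_eq_iff_r (sx j)), ?(Rmult_eq_iff_r (sy L j)) by auto; reflexivity.
Qed.

Lemma sat_iff L j (A A' : pt -> Prop) q : (1 <= L)%Z ->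
  (forall P, A (of_unit L j P) <-> A' P) ->
  (sat L j A q <-> exists P, A' P /\ unit_rel L P (to_unit L j q)).
Proof.
  intros HL HA. split.
  - intros (p & Hp & HR). exists (to_unit L j p).
    rewrite <- HA, of_unit_to_unit, <- Rj_iff_unit_rel by auto. auto.
  - intros (P & HP & HE). exists (of_unit L j P).
    rewrite HA, Rj_iff_unit_rel, to_unit_of_unit by auto. auto.
Qed.

Lemma Xopen_iff L j c q : (1 <= L)%Z -> Xopen L j c q <-> Uopen L c (to_unit L j q).
Proof. intros HL. apply sat_iff; auto. intros. apply openY_of_unit; auto. Qed.

Lemma Xclosed_iff L j c q : (1 <= L)%Z -> Xclosed L j c q <-> Uclosed L c (to_unit L j q).
Proof. intros HL. apply sat_iff; auto. intros. apply closedY_of_unit; auto. Qed.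

Section Transport.
Variables (L j : Z) (A B A' B' : pt -> Prop).
Hypothesis HL : (1 <= L)%Z.
Hypothesis HA : forall q, A q <-> A' (to_unit L j q).
Hypothesis HB : forall q, B q <-> B' (to_unit L j q).

Lemma subset_to_unit : subset A B <-> subset A' B'.
Proof.
  split; intros H Q HQ.
  - rewrite <- (to_unit_of_unit L j Q HL) in *. apply HB, H, HA. auto.
  - apply HB, H, HA. auto.
Qed.

Lemma seteq_to_unit : seteq A B <-> seteq A' B'.
Proof.
  split; intros H Q.
  - rewrite <- (to_unit_of_unit L j Q HL), <- HA, <- HB. apply H.
  - rewrite HA, HB. apply H.
Qed.

End Transport.

Lemma open_in_closed_iff L j c d : (1 <= L)%Z ->
  subset (Xopen L j c) (Xclosed L j d) <-> subset (Uopen L c) (Uclosed L d).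
Proof.
  intros HL. apply (subset_to_unit L j); auto; intros; [apply Xopen_iff | apply Xclosed_iff]; auto.
Qed.

Lemma open_seteq_iff L j c d : (1 <= L)%Z ->
  seteq (Xopen L j c) (Xopen L j d) <-> seteq (Uopen L c) (Uopen L d).
Proof. intros HL. apply (seteq_to_unit L j); auto; intros; apply Xopen_iff; auto. Qed.

Definition center (c : cell) : pt :=
  let '(t, a, b) := c in
  (IZR a + match t with CV | CVt => 0 | _ => / 2 end,
   IZR b + match t with CV | CH => 0 | _ => / 2 end).

Definition vshift (c : cell) (z : Z) : cell := let '(t, a, b) := c in (t, a, (b + z)%Z).

Definition cofaces (c : cell) : list cell :=
  let '(t, a, b) := c in
  match t with
  | CV => (CH, a, b) :: (CH, a - 1, b) :: (CVt, a, b) :: (CVt, a, b - 1) :: (CF, a, b)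
          :: (CF, a - 1, b) :: (CF, a, b - 1) :: (CF, a - 1, b - 1) :: nil
  | CH => (CF, a, b) :: (CF, a, b - 1) :: nil
  | CVt => (CF, a, b) :: (CF, a - 1, b) :: nil
  | CF => nil
  end%Z.

Definition faces (c : cell) : list cell :=
  let '(t, a, b) := c in
  match t with
  | CV => c :: nil
  | CH => c :: (CV, a, b) :: (CV, a + 1, b) :: nil
  | CVt => c :: (CV, a, b) :: (CV, a, b + 1) :: nil
  | CF => c :: (CV, a, b) :: (CV, a + 1, b) :: (CV, a, b + 1) :: (CV, a + 1, b + 1)
          :: (CH, a, b) :: (CH, a, b + 1) :: (CVt, a, b) :: (CVt, a + 1, b) :: nil
  end%Z.

Lemma cofaces_length c : (length (cofaces c) <= 8)%nat.
Proof. destruct c as [[[] a] b]; simpl; lia. Qed.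

Lemma faces_length c : (length (faces c) <= 9)%nat.
Proof. destruct c as [[[] a] b]; simpl; lia. Qed.

Lemma IZR_le_lt_succ (x y : Z) : IZR x < IZR y + 1 -> (x <= y)%Z.
Proof. intros H. rewrite <- plus_IZR in H. apply lt_IZR in H. lia. Qed.

Ltac int_cmp x y :=
  try (assert ((x <= y)%Z) by (apply IZR_le_lt_succ; lra));
  try (assert ((y <= x)%Z) by (apply IZR_le_lt_succ; lra));
  try (assert ((x <= y + 1)%Z) by (apply IZR_le_lt_succ; rewrite plus_IZR; lra));
  try (assert ((y <= x + 1)%Z) by (apply IZR_le_lt_succ; rewrite plus_IZR; lra));
  try (assert ((x = y)%Z) by (apply eq_IZR; lra)).

Ltac solve_In := repeat (first [left; repeat f_equal; lia | right]).

Lemma closed_center_coface c d : closedU d (center c) -> d = c \/ In d (cofaces c).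
Proof.
  destruct c as [[t a] b], d as [[t' a'] b'].
  destruct t, t'; unfold closedU, center; cbn [fst snd]; intros H; int_cmp a a'; int_cmp b b';
    destruct (Z.eq_dec a' a); destruct (Z.eq_dec b' b); cbn [cofaces In]; try solve_In.
  all: exfalso; try subst; try (assert (a' = a) by lia); try (assert (b' = b) by lia);
    subst; lra.
Qed.

Lemma closed_center_face c d : closedU c (center d) -> In d (faces c).
Proof.
  destruct c as [[t a] b], d as [[t' a'] b'].
  destruct t, t'; unfold closedU, center; cbn [fst snd]; intros H; int_cmp a a'; int_cmp b b';
    destruct (Z.eq_dec a' a); destruct (Z.eq_dec b' b); cbn [faces In]; try solve_In.
  all: exfalso; try subst; try (assert (a' = a) by lia); try (assert (b' = b) by lia);
    subst; lra.
Qed.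

Lemma center_open c : openU c (center c).
Proof. destruct c as [[[] a] b]; unfold openU, center; cbn [fst snd]; lra. Qed.

Lemma open_closed c P : openU c P -> closedU c P.
Proof. destruct c as [[[] a] b]; unfold openU, closedU; lra. Qed.

Lemma center_in_Uopen L c : Uopen L c (center c).
Proof. exists (center c). split; [apply center_open | apply unit_rel_refl]. Qed.

Lemma center_vshift c z : center (vshift c z) = (fst (center c), snd (center c) + IZR z).
Proof.
  destruct c as [[t a] b]. unfold center, vshift; cbn [fst snd]. rewrite plus_IZR. f_equal. ring.
Qed.

Lemma vshift_opp c z : vshift (vshift c z) (- z) = c.
Proof. destruct c as [[t a] b]. unfold vshift. f_equal. lia. Qed.

Lemma half_nonint a m : IZR a + / 2 <> IZR m.
Proof. intros H. int_cmp a m. assert (a = m) by lia. subst. lra. Qed.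

Lemma in_block_int L e s l Y : in_block L e s l Y <->
  IZR ((3 * L) ^ e * (3 * l + s - 1)) <= Y <= IZR ((3 * L) ^ e * (3 * l + s + 1)).
Proof.
  unfold in_block, vstep. rewrite !(mult_IZR ((3 * L) ^ e)), minus_IZR, (plus_IZR _ 1).
  reflexivity.
Qed.

(* Block boundaries are integers, so a block containing the midpoint of a unit
   segment contains the whole segment. *)
Lemma in_block_segment L e s l b Y : in_block L e s l (IZR b + / 2) ->
  IZR b <= Y <= IZR b + 1 -> in_block L e s l Y.
Proof.
  rewrite !in_block_int. intros [H1 H2] [H3 H4].
  set (m1 := ((3 * L) ^ e * (3 * l + s - 1))%Z) in *.
  set (m2 := ((3 * L) ^ e * (3 * l + s + 1))%Z) in *.
  assert (m1 <= b)%Z by (apply IZR_le_lt_succ; lra).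
  assert (b < m2)%Z by (apply lt_IZR; lra).
  apply IZR_le in H. assert (IZR (b + 1) <= IZR m2) by (apply IZR_le; lia).
  rewrite plus_IZR in H5. lra.
Qed.

Lemma open_vshift L c z P : (1 <= L)%Z ->
  unit_rel L (center c) (center (vshift c z)) -> openU c P ->
  openU (vshift c z) (fst P, snd P + IZR z) /\ unit_rel L P (fst P, snd P + IZR z).
Proof.
  intros HL HE HP. rewrite center_vshift in HE.
  destruct c as [[t a] b], P as [x y]. unfold openU, vshift in *; cbn [fst snd] in *.
  rewrite plus_IZR.
  destruct t.
  2, 4: apply unit_rel_nonint in HE; [| cbn; intros m; apply half_nonint];
    cbn in HE; injection HE as HE; replace (IZR z) with 0 by lra;
    rewrite !Rplus_0_r; split; [lra | apply unit_rel_refl].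
  - destruct HP as [-> ->]. cbn in HE. rewrite !Rplus_0_r in HE. split; [lra | exact HE].
  - destruct HP as [-> Hy]. split; [lra |].
    destruct HE as [_ [Hs | (e & k & s & l & n & Hl & Hb1 & Hb2 & Hz)]]; cbn [center fst snd] in *.
    + replace (IZR z) with 0 by lra. rewrite !Rplus_0_r. apply unit_rel_refl.
    + rewrite Rplus_0_r in Hl. split; [reflexivity | right]. cbn [fst snd].
      exists e, k, s, l, n. split; [exact Hl | split; [| split]].
      * apply (in_block_segment L e s l b); auto. lra.
      * apply (in_block_segment L e s l (b + z)); rewrite plus_IZR; [| lra].
        replace (IZR b + IZR z + / 2) with (IZR b + / 2 + IZR z) by ring. exact Hb2.
      * lra.
Qed.

Lemma open_vshift_seteq L c z : (1 <= L)%Z ->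
  unit_rel L (center c) (center (vshift c z)) -> seteq (Uopen L c) (Uopen L (vshift c z)).
Proof.
  intros HL HE Q. split.
  - intros (P & HP & HPQ). destruct (open_vshift L c z P HL HE HP) as [H1 H2].
    exists (fst P, snd P + IZR z). split; auto.
    eapply unit_rel_trans; eauto. apply unit_rel_sym; auto.
  - intros (P & HP & HPQ).
    assert (HE' : unit_rel L (center (vshift c z)) (center (vshift (vshift c z) (- z))))
      by (rewrite vshift_opp; apply unit_rel_sym; auto).
    destruct (open_vshift L _ _ P HL HE' HP) as [H1 H2]. rewrite vshift_opp in H1.
    exists (fst P, snd P + IZR (- z)). split; auto.
    eapply unit_rel_trans; eauto. apply unit_rel_sym; auto.
Qed.

Lemma length_flat_map_le {X Y} (f : X -> list Y) (K : nat) (l : list X) :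
  (forall x, (length (f x) <= K)%nat) -> (length (flat_map f l) <= K * length l)%nat.
Proof.
  intros H. induction l as [| x l IH]; cbn [flat_map length]; [lia |].
  rewrite length_app. specialize (H x). lia.
Qed.

Lemma Uclosed_center_vshift L c d : Uclosed L c (center d) ->
  exists z, closedU c (center (vshift d z)) /\ unit_rel L (center d) (center (vshift d z)).
Proof.
  intros (P & HP & HE). apply unit_rel_sym in HE.
  destruct (unit_rel_int_shift _ _ _ HE) as [z ->].
  exists z. rewrite center_vshift. auto.
Qed.

Lemma Uopen_in_face L c d : (1 <= L)%Z -> Uclosed L c (center d) ->
  exists d', In d' (faces c) /\ seteq (Uopen L d) (Uopen L d').
Proof.
  intros HL H. destruct (Uclosed_center_vshift L c d H) as (z & H1 & H2).
  exists (vshift d z). split; [apply closed_center_face | apply open_vshift_seteq]; auto.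
Qed.

Lemma Ulink_cells L c : (1 <= L)%Z -> exists l, (length l <= 24)%nat /\ forall d,
  ~ seteq (Uopen L d) (Uopen L c) -> subset (Uopen L c) (Uclosed L d) -> In d l.
Proof.
  intros HL. destruct (unit_rel_fibre L (center c) HL) as (zs & Hlen & Hzs).
  exists (flat_map (fun z => cofaces (vshift c z)) zs). split.
  - pose proof (length_flat_map_le (fun z => cofaces (vshift c z)) 8 zs
      (fun z => cofaces_length _)). lia.
  - intros d Hne Hsub. destruct (Hsub _ (center_in_Uopen L c)) as (P & HP & HE).
    destruct (Hzs P (unit_rel_sym _ _ _ HE)) as (z & Hz & ->).
    rewrite <- center_vshift in HP, HE.
    destruct (closed_center_coface _ _ HP) as [-> | Hd].
    + exfalso. apply Hne. intros Q. symmetry. apply open_vshift_seteq; auto.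
      apply unit_rel_sym; auto.
    + apply in_flat_map. eauto.
Qed.

Lemma closed_box c P : closedU c P ->
  let '(_, a, b) := c in IZR a <= fst P <= IZR a + 1 /\ IZR b <= snd P <= IZR b + 1.
Proof. destruct c as [[[] a] b]; unfold closedU; intros; lra. Qed.

Lemma nonint_between a x : IZR a < x < IZR a + 1 -> forall m, x <> IZR m.
Proof. intros H m ->. int_cmp a m. assert (a = m) by lia. subst. lra. Qed.

(* Only the two boundary columns of a strip of width one are glued. *)
Lemma strip_shifts L a : (1 <= L)%Z -> exists zs : list Z, (length zs <= 11)%nat /\
  forall x y Q, IZR a <= x <= IZR a + 1 -> unit_rel L (x, y) Q ->
  exists z, In z zs /\ Q = (x, y + IZR z).
Proof.
  intros HL.
  destruct (unit_rel_column_shifts L (IZR a) HL) as (zs1 & Hl1 & Hz1).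
  destruct (unit_rel_column_shifts L (IZR a + 1) HL) as (zs2 & Hl2 & Hz2).
  exists (0%Z :: zs1 ++ zs2). split; [cbn; rewrite length_app; lia |].
  intros x y Q Hx HE.
  destruct (Req_dec x (IZR a)) as [-> | Hxa]; [| destruct (Req_dec x (IZR a + 1)) as [-> | Hxa1]].
  - destruct (Hz1 _ _ HE) as (z & Hz & ->). exists z. split; [right; apply in_or_app |]; auto.
  - destruct (Hz2 _ _ HE) as (z & Hz & ->). exists z. split; [right; apply in_or_app |]; auto.
  - apply unit_rel_nonint in HE; [| apply (nonint_between a); cbn; lra].
    exists 0%Z. split; [left; reflexivity |]. rewrite HE. f_equal. ring.
Qed.

Lemma Uclosed_face_cover L a b : (1 <= L)%Z -> exists l : list (Z * Z), (length l <= 27)%nat /\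
  forall Q, Uclosed L (CF, a, b) Q -> exists ab, In ab l /\ closedU (CF, fst ab, snd ab) Q.
Proof.
  intros HL. destruct (strip_shifts L a HL) as (zs & Hlen & Hzs).
  exists (map (fun z => (a, b + z)%Z) zs). split; [rewrite length_map; lia |].
  intros Q ([x y] & HP & HE). pose proof HP as Hbox. apply closed_box in Hbox. cbn [fst] in Hbox.
  destruct (Hzs x y Q (proj1 Hbox) HE) as (z & Hz & ->).
  exists (a, b + z)%Z. split; [apply (in_map (fun z => (a, b + z)%Z)); auto |].
  unfold closedU in *; cbn [fst snd] in *. rewrite plus_IZR. lra.
Qed.

Definition neighbours (c : cell) : list cell :=
  let '(_, a, b) := c in
  flat_map (fun da => flat_map (fun db =>
    map (fun t => (t, a + da, b + db)%Z) (CV :: CH :: CVt :: CF :: nil))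
    (-1 :: 0 :: 1 :: nil)%Z) (-1 :: 0 :: 1 :: nil)%Z.

Lemma neighbours_length c : (length (neighbours c) <= 36)%nat.
Proof. destruct c as [[t a] b]. reflexivity. Qed.

Lemma closed_neighbours c d x y z :
  closedU c (x, y) -> closedU d (x, y + IZR z) -> In d (neighbours (vshift c z)).
Proof.
  intros H1 H2. apply closed_box in H1, H2.
  destruct c as [[t a] b], d as [[t' a'] b']. cbn [fst snd] in *. unfold vshift, neighbours.
  assert (a' <= a + 1)%Z by (apply le_IZR; rewrite plus_IZR; lra).
  assert (a <= a' + 1)%Z by (apply le_IZR; rewrite plus_IZR; lra).
  assert (b' <= b + z + 1)%Z by (apply le_IZR; rewrite !plus_IZR; lra).
  assert (b + z <= b' + 1)%Z by (apply le_IZR; rewrite !plus_IZR; lra).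
  apply in_flat_map. exists (a' - a)%Z. split; [cbn [In]; lia |].
  apply in_flat_map. exists (b' - (b + z))%Z. split; [cbn [In]; lia |].
  apply in_map_iff. exists t'. split.
  - f_equal; [f_equal |]; lia.
  - destruct t'; cbn [In]; tauto.
Qed.

Lemma Umeeting_cells L c : (1 <= L)%Z -> exists l, (length l <= 396)%nat /\
  forall d Q, Uclosed L c Q -> Uclosed L d Q -> In d l.
Proof.
  intros HL. destruct c as [[t a] b] eqn:Hc.
  destruct (strip_shifts L a HL) as (zs & Hlen & Hzs).
  exists (flat_map (fun z => neighbours (vshift c z)) zs). split.
  - pose proof (length_flat_map_le (fun z => neighbours (vshift c z)) 36 zs
      (fun z => neighbours_length _)). lia.
  - intros d Q ([x y] & HP1 & HE1) (P2 & HP2 & HE2).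
    pose proof HP1 as Hbox. rewrite <- Hc in HP1. apply closed_box in Hbox. cbn [fst] in Hbox.
    assert (HE : unit_rel L (x, y) P2) by (eapply unit_rel_trans; eauto; apply unit_rel_sym; auto).
    destruct (Hzs x y P2 (proj1 Hbox) HE) as (z & Hz & ->).
    apply in_flat_map. exists z. split; auto. eapply closed_neighbours; eauto.
Qed.

Definition Uadj (L : Z) (v d d' : cell) : Prop :=
  subset (Uopen L v) (Uclosed L d) /\ subset (Uopen L v) (Uclosed L d') /\
  exists e, cdim e = 1%nat /\ subset (Uopen L e) (Uclosed L d) /\ subset (Uopen L e) (Uclosed L d').

Definition Ugallery (L : Z) (v : cell) : relation cell := clos_refl_sym_trans cell (Uadj L v).

Lemma Uadj_sym L v d d' : Uadj L v d d' -> Uadj L v d' d.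
Proof. intros (H1 & H2 & e & H3 & H4 & H5). split; [| split]; auto. exists e. auto. Qed.

Lemma Uopen_sub_Uclosed L e d :
  (forall P, openU e P -> closedU d P) -> subset (Uopen L e) (Uclosed L d).
Proof. intros H Q (P & HP & HE). exists P. auto. Qed.

Lemma Uadj_intro L v d d' e :
  subset (Uopen L v) (Uclosed L d) -> subset (Uopen L v) (Uclosed L d') -> cdim e = 1%nat ->
  (forall P, openU e P -> closedU d P) -> (forall P, openU e P -> closedU d' P) ->
  Uadj L v d d'.
Proof.
  intros. split; [| split]; auto. exists e. split; [| split]; auto; apply Uopen_sub_Uclosed; auto.
Qed.

Lemma cofaces_vertex_closed a b d : In d (cofaces (CV, a, b)) -> closedU d (IZR a, IZR b).
Proof.
  cbn [cofaces In]. intros H.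
  repeat (destruct H as [<- | H]; [unfold closedU; cbn [fst snd]; rewrite ?minus_IZR; lra |]).
  destruct H.
Qed.

Lemma glued_vertex_cofaces L a b b1 d : (1 <= L)%Z ->
  unit_rel L (IZR a, IZR b1) (IZR a, IZR b) -> In d (cofaces (CV, a, b1)) ->
  subset (Uopen L (CV, a, b)) (Uclosed L d).
Proof.
  intros HL HE Hd Q ([x y] & [Hx Hy] & HPQ); cbn [fst snd] in *; subst x y.
  exists (IZR a, IZR b1). split; [apply cofaces_vertex_closed; auto | eapply unit_rel_trans; eauto].
Qed.

Fixpoint chain {A} (R : relation A) (x : A) (l : list A) : Prop :=
  match l with nil => True | y :: l' => R x y /\ chain R y l' end.

Lemma chain_connected {A} (R : relation A) x l :
  chain R x l -> forall y, In y (x :: l) -> clos_refl_sym_trans A R x y.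
Proof.
  revert x. induction l as [| z l IH]; intros x Hc y [-> | Hy]; try apply rst_refl.
  - destruct Hy.
  - destruct Hc as [Hxz Hc]. apply rst_trans with z; [apply rst_step; auto | apply IH; auto].
Qed.

(* Around a vertex the eight cells of its star form a cycle in which
   consecutive cells share an edge. *)
Lemma cofaces_gallery L a b b1 : (1 <= L)%Z -> unit_rel L (IZR a, IZR b1) (IZR a, IZR b) ->
  forall d, In d (cofaces (CV, a, b1)) -> Ugallery L (CV, a, b) (CVt, a, b1) d.
Proof.
  intros HL HE.
  pose proof (glued_vertex_cofaces L a b b1) as Hsub.
  assert (Hchain : chain (Uadj L (CV, a, b)) (CVt, a, b1)
    ((CF, a, b1) :: (CH, a, b1) :: (CF, a, b1 - 1) :: (CVt, a, b1 - 1) :: (CF, a - 1, b1 - 1)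
     :: (CH, a - 1, b1) :: (CF, a - 1, b1) :: nil)%Z).
  { cbn [chain]. split; [| split; [| split; [| split; [| split; [| split; [| split]]]]]]; auto;
      match goal with |- Uadj _ _ ?d ?d' =>
        let e := match d with (CVt, _, _) => d | (CH, _, _) => d | _ => d' end in
        apply (Uadj_intro L _ _ _ e); [apply Hsub; auto; cbn; tauto | apply Hsub; auto; cbn; tauto
          | reflexivity | |];
        intros [x y] HP; unfold openU, closedU in *; cbn [fst snd] in *;
        rewrite ?minus_IZR in *; lra
      end. }
  intros d Hd. apply (chain_connected _ _ _ Hchain). cbn [cofaces In] in Hd |- *. tauto.
Qed.

Lemma vertices_glued L a e k s l c : (1 <= L)%Z -> level (IZR a) e k s ->
  ((3 * L) ^ e * (3 * l + s - 1) <= c)%Z -> (c + (3 * L) ^ e <= (3 * L) ^ e * (3 * l + s + 1))%Z ->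
  unit_rel L (IZR a, IZR c) (IZR a, IZR (c + (3 * L) ^ e)).
Proof.
  intros HL Hl H1 H2. pose proof Hl as [He _].
  assert (0 < (3 * L) ^ e)%Z by (apply Z.pow_pos_nonneg; lia).
  split; [reflexivity | right]. exists e, k, s, l, 1%Z. cbn [fst snd].
  rewrite !in_block_int. split; [exact Hl | split; [| split]].
  - split; apply IZR_le; lia.
  - split; apply IZR_le; lia.
  - unfold vstep. rewrite plus_IZR. ring.
Qed.

Lemma vertical_edges_glued L a e k s l c : (1 <= L)%Z -> level (IZR a) e k s ->
  ((3 * L) ^ e * (3 * l + s - 1) <= c)%Z ->
  (c + (3 * L) ^ e + 1 <= (3 * L) ^ e * (3 * l + s + 1))%Z ->
  unit_rel L (center (CVt, a, c)) (center (vshift (CVt, a, c) ((3 * L) ^ e))).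
Proof.
  intros HL Hl H1 H2. pose proof (vstep_pos L e HL (proj1 Hl)) as HB. unfold vstep in HB.
  rewrite center_vshift. cbn [center fst snd].
  split; [reflexivity | right]. exists e, k, s, l, 1%Z. cbn [fst snd].
  rewrite Rplus_0_r, !in_block_int. apply IZR_le in H1, H2. rewrite !plus_IZR in H2.
  split; [exact Hl | split; [| split]].
  - split; lra.
  - split; lra.
  - unfold vstep. ring.
Qed.

Lemma Uadj_glued L v c z : (1 <= L)%Z -> unit_rel L (center c) (center (vshift c z)) ->
  cdim c = 1%nat -> subset (Uopen L v) (Uclosed L c) ->
  subset (Uopen L v) (Uclosed L (vshift c z)) -> Uadj L v c (vshift c z).
Proof.
  intros HL HE Hd H1 H2. split; [| split]; auto. exists c. split; [| split]; auto.
  - apply Uopen_sub_Uclosed, open_closed.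
  - intros Q HQ. apply (open_vshift_seteq L c z HL HE) in HQ. destruct HQ as (P & HP & HPQ).
    exists P. split; auto. apply open_closed; auto.
Qed.

(* Two vertices of a column glued by one step are joined through the glued
   vertical edges just above them, or, at the top of a block, just below them. *)
Lemma glued_edge_gallery L a b e k s l c : (1 <= L)%Z -> level (IZR a) e k s ->
  ((3 * L) ^ e * (3 * l + s - 1) <= c)%Z -> (c + (3 * L) ^ e <= (3 * L) ^ e * (3 * l + s + 1))%Z ->
  unit_rel L (IZR a, IZR c) (IZR a, IZR b) ->
  Ugallery L (CV, a, b) (CVt, a, c) (CVt, a, c + (3 * L) ^ e)%Z.
Proof.
  intros HL Hl H1 H2 HE. pose proof Hl as [He _].
  assert (HMe : (0 < (3 * L) ^ e)%Z) by (apply Z.pow_pos_nonneg; lia).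
  assert (Hlen : ((3 * L) ^ e * (3 * l + s + 1) =
                  (3 * L) ^ e * (3 * l + s - 1) + 2 * (3 * L) ^ e)%Z) by ring.
  assert (HE' : unit_rel L (IZR a, IZR (c + (3 * L) ^ e)) (IZR a, IZR b))
    by (eapply unit_rel_trans; [auto | apply unit_rel_sym, (vertices_glued L a e k s l) | ]; eauto).
  pose proof (glued_vertex_cofaces L a b) as Hsub.
  destruct (Z_le_gt_dec (c + (3 * L) ^ e + 1) ((3 * L) ^ e * (3 * l + s + 1))) as [Hc | Hc].
  - apply rst_step, (Uadj_glued L _ (CVt, a, c)); auto.
    + apply (vertical_edges_glued L a e k s l); auto.
    + apply (Hsub c); auto; cbn; tauto.
    + apply (Hsub (c + (3 * L) ^ e)%Z); auto; cbn; tauto.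
  - apply rst_trans with (CVt, a, c - 1)%Z; [apply (cofaces_gallery L a b c); cbn; auto |].
    apply rst_trans with (CVt, a, c + (3 * L) ^ e - 1)%Z.
    + replace (c + (3 * L) ^ e - 1)%Z with (c - 1 + (3 * L) ^ e)%Z by ring.
      apply rst_step, (Uadj_glued L _ (CVt, a, c - 1)%Z); auto.
      * apply (vertical_edges_glued L a e k s l); auto; lia.
      * apply (Hsub c); auto; cbn; tauto.
      * cbn [vshift]. replace (c - 1 + (3 * L) ^ e)%Z with (c + (3 * L) ^ e - 1)%Z by ring.
        apply (Hsub (c + (3 * L) ^ e)%Z); auto; cbn; tauto.
    + apply rst_sym, (cofaces_gallery L a b (c + (3 * L) ^ e)); cbn; auto.
Qed.

Lemma glued_column_gallery L a b e k s l (n : nat) c : (1 <= L)%Z -> level (IZR a) e k s ->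
  ((3 * L) ^ e * (3 * l + s - 1) <= c)%Z ->
  (c + Z.of_nat n * (3 * L) ^ e <= (3 * L) ^ e * (3 * l + s + 1))%Z ->
  unit_rel L (IZR a, IZR c) (IZR a, IZR b) ->
  Ugallery L (CV, a, b) (CVt, a, c) (CVt, a, c + Z.of_nat n * (3 * L) ^ e)%Z.
Proof.
  intros HL Hl. pose proof Hl as [He _].
  assert (HMe : (0 < (3 * L) ^ e)%Z) by (apply Z.pow_pos_nonneg; lia).
  revert c. induction n as [| n IH]; intros c H1 H2 HE.
  - rewrite Z.add_0_r. apply rst_refl.
  - rewrite Nat2Z.inj_succ in *.
    assert (c + (3 * L) ^ e <= (3 * L) ^ e * (3 * l + s + 1))%Z by nia.
    apply rst_trans with (CVt, a, c + (3 * L) ^ e)%Z.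
    + apply (glued_edge_gallery L a b e k s l); auto.
    + replace (c + Z.succ (Z.of_nat n) * (3 * L) ^ e)%Z
        with (c + (3 * L) ^ e + Z.of_nat n * (3 * L) ^ e)%Z by ring.
      apply IH; [lia | nia |].
      eapply unit_rel_trans; [auto | apply unit_rel_sym, (vertices_glued L a e k s l) |]; eauto.
Qed.

Lemma glued_vertices_gallery L a b b1 b2 : (1 <= L)%Z ->
  unit_rel L (IZR a, IZR b1) (IZR a, IZR b) -> unit_rel L (IZR a, IZR b2) (IZR a, IZR b) ->
  Ugallery L (CV, a, b) (CVt, a, b1) (CVt, a, b2).
Proof.
  intros HL H1 H2.
  assert (H12 : unit_rel L (IZR a, IZR b1) (IZR a, IZR b2))
    by (eapply unit_rel_trans; eauto; apply unit_rel_sym; auto).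
  destruct H12 as [_ [Hs | (e & k & s & l & n & Hl & Hb1 & Hb2 & Hy)]]; cbn [fst snd] in *.
  - apply eq_IZR in Hs. subst. apply rst_refl.
  - unfold vstep in Hy. rewrite <- mult_IZR, <- plus_IZR in Hy. apply eq_IZR in Hy. subst b2.
    rewrite in_block_int in Hb1, Hb2. destruct Hb1 as [Hb1 Hb1'], Hb2 as [Hb2 Hb2'].
    apply le_IZR in Hb1, Hb1', Hb2, Hb2'.
    destruct (Z_le_gt_dec 0 n) as [Hn | Hn].
    + rewrite <- (Z2Nat.id n) in Hb2' |- * by lia. apply (glued_column_gallery L a b e k s l); auto.
    + apply rst_sym.
      replace b1 with (b1 + n * (3 * L) ^ e + Z.of_nat (Z.to_nat (- n)) * (3 * L) ^ e)%Z at 2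
        by (rewrite Z2Nat.id by lia; ring).
      apply (glued_column_gallery L a b e k s l); auto.
      rewrite Z2Nat.id by lia. lia.
Qed.

Lemma closed_through_vertex L a b c : (1 <= cdim c)%nat ->
  subset (Uopen L (CV, a, b)) (Uclosed L c) ->
  exists b1, unit_rel L (IZR a, IZR b1) (IZR a, IZR b) /\ In c (cofaces (CV, a, b1)).
Proof.
  intros Hc H. destruct (H _ (center_in_Uopen L (CV, a, b))) as (P & HP & HE).
  cbn [center] in HE. rewrite !Rplus_0_r in HE.
  destruct (unit_rel_int_shift _ _ _ (unit_rel_sym _ _ _ HE)) as [z ->]. cbn [fst snd] in *.
  exists (b + z)%Z. rewrite plus_IZR. split; auto.
  assert (Hcl : closedU c (center (CV, a, (b + z)%Z)))
    by (cbn [center]; rewrite plus_IZR, !Rplus_0_r; auto).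
  destruct (closed_center_coface _ _ Hcl) as [-> | Hin]; auto. cbn in Hc. lia.
Qed.

Lemma rst_sym_rt {A} (R : relation A) x y : (forall x y, R x y -> R y x) ->
  clos_refl_sym_trans A R x y -> clos_refl_trans A R x y.
Proof.
  intros Hs H. induction H as [x y H | x | x y _ IH | x y z _ IH1 _ IH2].
  - apply rt_step; auto.
  - apply rt_refl.
  - clear -Hs IH. induction IH as [x y H | x | x y z _ IH1 _ IH2].
    + apply rt_step; auto.
    + apply rt_refl.
    + eapply rt_trans; eauto.
  - eapply rt_trans; eauto.
Qed.

Lemma Uvertex_galleries L a b c c' : (1 <= L)%Z -> (1 <= cdim c)%nat -> (1 <= cdim c')%nat ->
  subset (Uopen L (CV, a, b)) (Uclosed L c) -> subset (Uopen L (CV, a, b)) (Uclosed L c') ->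
  clos_refl_trans cell (Uadj L (CV, a, b)) c c'.
Proof.
  intros HL Hc Hc' H H'.
  destruct (closed_through_vertex L a b c Hc H) as (b1 & HE1 & Hin1).
  destruct (closed_through_vertex L a b c' Hc' H') as (b2 & HE2 & Hin2).
  apply rst_sym_rt; [intros; apply Uadj_sym; auto |].
  apply rst_trans with (CVt, a, b1); [apply rst_sym, (cofaces_gallery L a b b1); auto |].
  apply rst_trans with (CVt, a, b2); [apply (glued_vertices_gallery L a b b1 b2); auto |].
  apply (cofaces_gallery L a b b2); auto.
Qed.

Section Claims.
Variables (L j : Z).
Hypothesis HL : (1 <= L)%Z.

Lemma skeleton_nonint_height p : skel1 L j p ->
  (forall a, fst (to_unit L j p) <> IZR a) -> exists b, snd (to_unit L j p) = IZR b.
Proof.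
  intros (c & Hc & Hp) Hn. apply Xopen_iff in Hp as (P & HP & HE); auto.
  assert (HPx : forall a, fst P <> IZR a) by (destruct HE as [Hx _]; rewrite <- Hx; auto).
  rewrite (unit_rel_nonint L P _ HPx HE).
  destruct c as [[[] a] b]; cbn in Hc, HP.
  - exfalso. apply (HPx a), HP.
  - exists b. apply HP.
  - exfalso. apply (HPx a), HP.
  - lia.
Qed.

Lemma skeleton_fibre_succ p q : skel1 L j p -> skel1 L j q -> Rj L (j + 1) p q -> Rj L j p q.
Proof.
  intros Hp Hq HR.
  destruct (Rj_succ_cases L j p q HL HR) as [H | (Hni & Hx & n & Hn0 & Hn & Hy)]; auto.
  exfalso.
  destruct (skeleton_nonint_height p Hp Hni) as [b Hb].
  destruct (skeleton_nonint_height q Hq) as [b' Hb']; [rewrite Hx; auto |].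
  rewrite Hb, Hb', m_v_IZR, <- !mult_IZR, <- plus_IZR in Hy. apply eq_IZR in Hy. nia.
Qed.

Lemma vertex_fibre_succ a b p : Xopen L j (CV, a, b) p ->
  forall q, Rj L (j + 1) p q -> Rj L j p q.
Proof.
  intros Hp q HR. destruct (Rj_succ_cases L j p q HL HR) as [H | (Hni & _)]; auto.
  exfalso. apply Xopen_iff in Hp as ([x y] & [Hx _] & [HE _]); auto.
  cbn [fst snd] in *. apply (Hni a). congruence.
Qed.

Lemma Rj_fibre p : exists l : list pt, (length l <= 3)%nat /\ forall q, Rj L j p q -> In q l.
Proof.
  set (P := to_unit L j p). destruct (unit_rel_fibre L P HL) as (zs & Hlen & Hzs).
  exists (map (fun z => of_unit L j (fst P, snd P + IZR z)) zs).
  split; [rewrite length_map; auto |].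
  intros q HR. apply Rj_iff_unit_rel in HR; auto. destruct (Hzs _ HR) as (z & Hz & Hq).
  apply in_map_iff. exists z. split; auto. rewrite <- Hq. apply of_unit_to_unit; auto.
Qed.

Lemma link_atmost c : atmost_distinct 24 (in_link L j c) (Xopen L j).
Proof.
  destruct (Ulink_cells L c HL) as (l & Hlen & Hl). exists l. split; auto.
  intros d [Hne Hsub]. exists d. split; [| intros q; tauto].
  apply Hl; [rewrite <- open_seteq_iff; eauto | rewrite <- (open_in_closed_iff L j); auto].
Qed.

Lemma vertex_galleries a b c c' : (1 <= cdim c)%nat -> (1 <= cdim c')%nat ->
  subset (Xopen L j (CV, a, b)) (Xclosed L j c) -> subset (Xopen L j (CV, a, b)) (Xclosed L j c') ->
  clos_refl_trans cell (adj_at L j (CV, a, b)) c c'.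
Proof.
  intros Hc Hc' H H'. rewrite open_in_closed_iff in H, H' by auto.
  assert (Hadj : forall d d', Uadj L (CV, a, b) d d' -> adj_at L j (CV, a, b) d d').
  { intros d d' (H1 & H2 & e & He & H3 & H4).
    rewrite <- !(open_in_closed_iff L j) in H1, H2, H3, H4 by auto. split; [| split]; eauto. }
  pose proof (Uvertex_galleries L a b c c' HL Hc Hc' H H') as Hg. clear - Hadj Hg.
  induction Hg as [d d' Hd | d | d d' d'' _ IH1 _ IH2];
    [apply rt_step, Hadj, Hd | apply rt_refl | eapply rt_trans; eauto].
Qed.

Lemma center_in_Xopen d : Xopen L j d (of_unit L j (center d)).
Proof. apply Xopen_iff; auto. rewrite to_unit_of_unit by auto. apply center_in_Uopen. Qed.

Lemma closed_center_distinct c d : Xclosed L j c (of_unit L j (center d)) ->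
  exists d', In d' (faces c) /\ seteq (Xopen L j d) (Xopen L j d').
Proof.
  intros Hd. rewrite Xclosed_iff, to_unit_of_unit in Hd by auto.
  destruct (Uopen_in_face L c d HL Hd) as (d' & Hd' & Hs).
  exists d'. split; auto. apply open_seteq_iff; auto.
Qed.

Lemma closed_cell_atmost c :
  atmost_distinct 9 (fun d => subset (Xopen L j d) (Xclosed L j c)) (Xopen L j).
Proof.
  exists (faces c). split; [apply faces_length |].
  intros d Hd. apply closed_center_distinct, Hd, center_in_Xopen.
Qed.

Lemma closed_face_cover a b : exists l : list (Z * Z), (length l <= 27)%nat /\
  forall q, Xclosed L j (CF, a, b) q -> exists ab, In ab l /\ closedY L j (CF, fst ab, snd ab) q.
Proof.
  destruct (Uclosed_face_cover L a b HL) as (l & Hlen & Hl). exists l. split; auto.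
  intros q Hq. apply Xclosed_iff in Hq; auto. destruct (Hl _ Hq) as (ab & Hab & Hc).
  exists ab. split; auto. rewrite <- (of_unit_to_unit L j q), closedY_of_unit; auto.
Qed.

Lemma meeting_cells c : exists l, (length l <= 396)%nat /\ forall d, meet L j c d -> In d l.
Proof.
  destruct (Umeeting_cells L c HL) as (l & Hlen & Hl). exists l. split; auto.
  intros d (q & H1 & H2). apply (Hl d (to_unit L j q)); apply Xclosed_iff; auto.
Qed.

End Claims.

Fixpoint ball_bound (N : nat) : nat := match N with O => O | S n => S (396 * ball_bound n) end.

Lemma meeting_cells_list L j l : (1 <= L)%Z -> exists l', (length l' <= 396 * length l)%nat /\
  forall d c, In d l -> meet L j d c -> In c l'.
Proof.
  intros HL. induction l as [| d l IH].
  - exists nil. split; [cbn; lia | intros ? ? []].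
  - destruct IH as (l' & Hl' & Hin). destruct (meeting_cells L j HL d) as (ld & Hld & Hd).
    exists (ld ++ l'). split; [rewrite length_app; cbn; lia |].
    intros d' c [<- | H] Hm; apply in_or_app; eauto.
Qed.

Lemma reach_cells L j N c0 : (1 <= L)%Z -> exists l, (length l <= ball_bound N)%nat /\
  forall c, reach L j c0 N c -> In c l.
Proof.
  intros HL. induction N as [| N IH].
  - exists nil. split; [reflexivity | intros c []].
  - destruct IH as (l & Hlen & Hl). destruct (meeting_cells_list L j l HL) as (l' & Hl' & Hin).
    exists (c0 :: l'). split; [cbn; lia |].
    intros c [-> | (d & Hd & Hm)]; [left | right]; eauto.
Qed.

Lemma ball_atmost L N : (1 <= L)%Z -> forall j c0,
  atmost_distinct (9 * ball_bound N) (fun d => subset (Xopen L j d) (ball L j c0 N)) (Xopen L j).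
Proof.
  intros HL j c0. destruct (reach_cells L j N c0 HL) as (l & Hlen & Hl).
  exists (flat_map faces l). split.
  - pose proof (length_flat_map_le faces 9 l faces_length). lia.
  - intros d Hd. destruct (Hd _ (center_in_Xopen L j HL d)) as (c & Hreach & Hcl).
    destruct (closed_center_distinct L j HL c d Hcl) as (d' & Hd' & Hs).
    exists d'. split; auto. apply in_flat_map. eauto.
Qed.

Theorem mainTheorem5 (L : Z) (HL : (100 <= L)%Z) :
  (forall j : Z,
    (forall p q, skel1 L j p -> skel1 L j q -> Rj L (j + 1) p q -> Rj L j p q) /\
    (forall a b p, Xopen L j (CV, a, b) p ->
       forall q, Rj L (j + 1) p q -> Rj L j p q) /\
    (forall p : pt, exists l : list pt, (length l <= 3)%nat /\
       forall q, Rj L j p q -> In q l) /\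
    (forall c : cell, atmost_distinct 24 (in_link L j c) (Xopen L j)) /\
    (forall (a b : Z) (c c' : cell),
       (1 <= cdim c)%nat -> (1 <= cdim c')%nat ->
       subset (Xopen L j (CV, a, b)) (Xclosed L j c) ->
       subset (Xopen L j (CV, a, b)) (Xclosed L j c') ->
       clos_refl_trans cell (adj_at L j (CV, a, b)) c c') /\
    (forall c : cell,
       atmost_distinct 9 (fun d => subset (Xopen L j d) (Xclosed L j c)) (Xopen L j)) /\
    (forall a b : Z, exists l : list (Z * Z), (length l <= 27)%nat /\
       forall q, Xclosed L j (CF, a, b) q ->
         exists ab, In ab l /\ closedY L j (CF, fst ab, snd ab) q)) /\
  (forall N : nat, exists C : nat, forall (j : Z) (c0 : cell),
     atmost_distinct C (fun d => subset (Xopen L j d) (ball L j c0 N)) (Xopen L j)).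
Proof.
  assert (HL1 : (1 <= L)%Z) by lia.
  split.
  - intros j. repeat split.
    + exact (skeleton_fibre_succ L j HL1).
    + exact (vertex_fibre_succ L j HL1).
    + exact (Rj_fibre L j HL1).
    + exact (link_atmost L j HL1).
    + exact (vertex_galleries L j HL1).
    + exact (closed_cell_atmost L j HL1).
    + exact (closed_face_cover L j HL1).
  - intros N. exists (9 * ball_bound N)%nat. exact (ball_atmost L N HL1).
Qed.
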